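(* Let $[\alpha]_{K\times K}\in\mathcal A_{\mathrm{SLS}}$, let $\pi_1,\dots,\pi_n$ ($n>1$) be disjoint cycles, and let $\pi_{1,2,\dots,n}=(\pi_1\to\pi_2\to\cdots\to\pi_n)$ be their combination. Then $$\Delta_{\pi_{1,2,\dots,n}}\le\Delta_{\pi_1}+\cdots+\Delta_{\pi_n}+\Delta_\pi,\qquad\text{where }\pi=(\pi_1(1)\to\pi_2(1)\to\cdots\to\pi_n(1)).$$
   Context: SLS regime: $\mathcal A_{\mathrm{SLS}}=\{[\alpha]\in\mathbb R_+^{K\times K}:\ \alpha_{ii}\ge\max(\alpha_{ij},\alpha_{ki},\alpha_{ik}+\alpha_{ji}-\alpha_{jk})\ \forall i,j,k\in[K],\ i\notin\{j,k\}\}$. Cycles: a cycle $\pi=(i_1\to\cdots\to i_M)$, $M\ge1$, is an ordered list of distinct indices of $[K]$, read cyclically ($i_{M+1}=i_1$); $\pi(m)=i_m$, in particular $\pi(1)=i_1$ is the head; $\{\pi\}=\{i_1,\dots,i_M\}$; cycles are disjoint if their sets are disjoint. For disjoint cycles $\pi_1=(i_{1,1}\to\cdots\to i_{1,m_1}),\dots,\pi_n=(i_{n,1}\to\cdots\to i_{n,m_n})$, the combined cycle is $(\pi_1\to\cdots\to\pi_n)=(i_{1,1}\to\cdots\to i_{1,m_1}\to i_{2,1}\to\cdots\to i_{2,m_2}\to\cdots\to i_{n,m_n})$. $\delta_{ij}=\alpha_{ii}-\alpha_{ji}$ ($i\neq j$), $\delta_{ii}=0$; $\Delta_\pi=\sum_{m=1}^M\delta_{i_mi_{m+1}}$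 if $M>1$, $\Delta_\pi=\alpha_{i_1i_1}$ if $M=1$. *)

From HB Require Import structures.
From mathcomp Require Import all_boot all_order all_algebra.
Set Implicit Arguments. Unset Strict Implicit. Unset Printing Implicit Defensive.
Import Order.TTheory GRing.Theory Num.Theory.
Local Open Scope ring_scope.

Definition in_SLS (R : realFieldType) (K : nat) (alpha : 'I_K -> 'I_K -> R) : Prop :=
  (forall i j, 0 <= alpha i j) /\
  (forall i j k, i != j -> i != k ->
     [/\ alpha i j <= alpha i i,
         alpha k i <= alpha i i &
         alpha i k + alpha j i - alpha j k <= alpha i i]).

Definition delta (R : realFieldType) (K : nat) (alpha : 'I_K -> 'I_K -> R)
  (i j : 'I_K) : R :=
  if i == j then 0 else alpha i i - alpha j i.

(* A cycle is a nonempty duplicate-free list of indices, read cyclically. *)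
Definition is_cycle (K : nat) (p : seq 'I_K) : bool := (0 < size p)%N && uniq p.

Definition Delta (R : realFieldType) (K : nat) (alpha : 'I_K -> 'I_K -> R)
  (p : seq 'I_K) : R :=
  match p with
  | [:: i] => alpha i i
  | i :: _ =>
      \sum_(m < size p) delta alpha (nth i p m) (nth i p ((m.+1) %% size p))
  | [::] => 0
  end.

Definition pairwise_disjoint (K : nat) (ps : seq (seq 'I_K)) : Prop :=
  forall a b : nat, (a < size ps)%N -> (b < size ps)%N -> a <> b ->
    forall x : 'I_K, x \in nth [::] ps a -> x \notin nth [::] ps b.

Definition combine (K : nat) (ps : seq (seq 'I_K)) : seq 'I_K := flatten ps.

Definition heads (K : nat) (ps : seq (seq 'I_K)) : seq 'I_K :=
  flatten [seq take 1 p | p <- ps].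

From HB Require Import structures.
From mathcomp Require Import all_boot all_order all_algebra.
From mathcomp Require Import lra.
Set Implicit Arguments. Unset Strict Implicit. Unset Printing Implicit Defensive.
Import Order.TTheory GRing.Theory Num.Theory.
Local Open Scope ring_scope.

(* Read [delta i j] as the cost of a step i -> j; then the cost
   [Delta] of a cycle of length at least two is the cost of walking once
   around it.  In the SLS regime [delta] satisfies a triangle inequality
   [delta k j <= delta k i + delta i j] (for i distinct from j and k).
   Consequently, leaving a cycle c = (h -> ... -> l) from its last vertex l
   towards an outside vertex z costs at most going around c and then
   stepping h -> z:  tour c z <= Delta c + delta h z  (for a one-vertex
   cycle this is just alpha_hh >= 0).
   The combined cycle is the concatenation of tours of pi_1, ..., pi_n,
   the tour of pi_k ending at the head of pi_(k+1) (and of pi_1 for k = n).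
   Applying the bound to each cycle and collecting the steps between heads
   gives, by induction on the list of cycles,
     tour (pi_1 ++ ... ++ pi_n) z <= sum_k Delta pi_k + tour (heads) z,
   and closing the loop with z = pi_1(1) yields the theorem. *)

Section CycleCost.
Variables (R : realFieldType) (K : nat) (alpha : 'I_K -> 'I_K -> R).

Fixpoint walk (x : 'I_K) (s : seq 'I_K) : R :=
  if s is y :: s' then delta alpha x y + walk y s' else 0.

Definition tour (L : seq 'I_K) (z : 'I_K) : R :=
  if L is x :: s then walk x (rcons s z) else 0.

Lemma walk_sum_nth (d x : 'I_K) (s : seq 'I_K) :
  \sum_(m < size s) delta alpha (nth d (x :: s) m) (nth d (x :: s) m.+1)
  = walk x s.
Proof.
elim: s x => [|y s IH] x /=; first by rewrite big_ord0.
by rewrite big_ord_recl /= IH.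
Qed.

Lemma walk_cat (x y : 'I_K) (s1 s2 : seq 'I_K) :
  walk x (s1 ++ y :: s2) = walk x (rcons s1 y) + walk y s2.
Proof.
elim: s1 x => [|w s1 IH] x /=; first by rewrite addr0.
by rewrite IH addrA.
Qed.

Lemma walk_rcons (x z : 'I_K) (s : seq 'I_K) :
  walk x (rcons s z) = walk x s + delta alpha (last x s) z.
Proof.
elim: s x => [|w s IH] x /=; first by rewrite addr0 add0r.
by rewrite IH addrA.
Qed.

Lemma tour_cat (h z : 'I_K) (t s : seq 'I_K) :
  tour ((h :: t) ++ s) z = tour (h :: t) (head z s) + tour s z.
Proof.
case: s => [|y s]; first by rewrite cats0 /= addr0.
by rewrite /tour /= rcons_cat walk_cat.
Qed.

Lemma tour1 (x z : 'I_K) : tour [:: x] z = delta alpha x z.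
Proof. by rewrite /tour /= addr0. Qed.

Lemma Delta_tour (x : 'I_K) (s : seq 'I_K) :
  s != [::] -> Delta alpha (x :: s) = tour (x :: s) x.
Proof.
case: s => [|y s] // _.
rewrite /Delta /tour walk_rcons -(walk_sum_nth x x (y :: s)).
rewrite [size _]/= big_ord_recr modnn /= -[last y s](nth_last x (x :: y :: s)).
congr (_ + _); apply: eq_bigr => -[m lt_m] _ /=.
by rewrite modn_small.
Qed.

Hypothesis sls : in_SLS alpha.

Lemma sls_bounds (i j k : 'I_K) : i != j -> i != k ->
  [/\ alpha i j <= alpha i i, alpha k i <= alpha i i
    & alpha i k + alpha j i - alpha j k <= alpha i i].
Proof. by case: sls => _; apply. Qed.

Lemma delta_triangle (i j k : 'I_K) : i != j -> i != k ->
  delta alpha k j <= delta alpha k i + delta alpha i j.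
Proof.
move=> ij ik; have [_ _ triangle] := sls_bounds ij ik.
rewrite /delta (negbTE ij) [k == i]eq_sym (negbTE ik).
have [<-|_] /= := eqVneq k j; last by lra.
have ki : k != i by rewrite eq_sym.
have [aki_kk _ _] := sls_bounds ki ki.
have [aik_ii _ _] := sls_bounds ik ik.
lra.
Qed.

Lemma tour_cycle_le (h z : 'I_K) (t : seq 'I_K) :
  uniq (h :: t) -> z \notin h :: t ->
  tour (h :: t) z <= Delta alpha (h :: t) + delta alpha h z.
Proof.
case: t => [|y t] uniq_c z_out.
  by rewrite /tour /= addr0 lerDr; case: sls.
have h_last : h != last y t.
  move: uniq_c => /= /andP[h_out _].
  by apply: contraNneq h_out => ->; exact: mem_last.
have z_h : h != z by apply: contraNneq z_out => ->; exact: mem_head.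
rewrite Delta_tour // /tour !walk_rcons /=.
have := delta_triangle z_h h_last; lra.
Qed.

Lemma heads_cons (h : 'I_K) (t : seq 'I_K) (ps : seq (seq 'I_K)) :
  heads ((h :: t) :: ps) = h :: heads ps.
Proof. by rewrite /heads /= take0. Qed.

Lemma tour_flatten_le (ps : seq (seq 'I_K)) (z : 'I_K) :
  all (@is_cycle K) ps ->
  sorted (fun c c' : seq 'I_K => [disjoint c & c']) ps ->
  z \notin last [::] ps ->
  tour (flatten ps) z <= \sum_(p <- ps) Delta alpha p + tour (heads ps) z.
Proof.
elim: ps => [|[|h t] ps IH]; [by rewrite big_nil /tour /= addr0 | by [] |].
move=> /andP[/andP[_ uniq_c] cycles] chain z_out.
rewrite big_cons heads_cons -[h :: heads ps]cat1s tour_cat tour1.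
case: ps IH cycles chain z_out => [|[|h' t'] ps] IH //.
  move=> _ _ z_out; have -> : flatten [:: h :: t] = h :: t by rewrite /= cats0.
  rewrite big_nil [head _ _]/= [tour (heads _) _]/= !addr0.
  exact: tour_cycle_le.
move=> cycles /andP[disj chain] z_out; set rest := (h' :: t') :: ps in IH *.
have h'_out : h' \notin h :: t by rewrite (disjointFl disj) ?mem_head.
have IHrest := IH cycles chain z_out.
have -> : flatten ((h :: t) :: rest) = (h :: t) ++ flatten rest by [].
have -> : head z (heads rest) = h' by rewrite /rest heads_cons.
rewrite tour_cat [head z _]/=.
have := tour_cycle_le uniq_c h'_out; lra.
Qed.

End CycleCost.

Theorem lemma6 (R : realFieldType) (K : nat) (alpha : 'I_K -> 'I_K -> R)
  (ps : seq (seq 'I_K)) :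
  in_SLS alpha ->
  (1 < size ps)%N ->
  all (@is_cycle K) ps ->
  pairwise_disjoint ps ->
  Delta alpha (combine ps) <=
    \sum_(p <- ps) Delta alpha p + Delta alpha (heads ps).
Proof.
move=> sls size_ps cycles disj.
have all_disj : pairwise (fun c c' : seq 'I_K => [disjoint c & c']) ps.
  apply/(pairwiseP [::]) => a b a_lt b_lt ab.
  have a_ne_b : a <> b by move=> a_b; rewrite a_b ltnn in ab.
  rewrite disjoint_has; apply/hasPn => x x_in.
  exact: (disj a b).
have chain := pairwise_sorted all_disj.
case: ps size_ps cycles disj all_disj chain => [|[|h t] [|[|h' t'] ps]] // _ cycles _.
  by case/and3P: cycles.
rewrite pairwise_cons => /andP[/allP disj_h _] chain.
have h_out : h \notin last (h' :: t') ps.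
  by rewrite (disjointFr (disj_h _ (mem_last _ _))) ?mem_head.
have := tour_flatten_le sls cycles chain h_out.
by rewrite /combine !heads_cons !Delta_tour //; case: t {cycles chain disj_h}.
Qed.
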